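(* Let $\mathbf{X}=[\mathbf{x}_1,\ldots,\mathbf{x}_n]\in\mathbb{R}^{d\times n}$ have nonzero columns, let $m$ be an integer with $2\le m<d$, and let $0<\alpha<1$. Let the random sampling matrices $\mathbf{S}_i$ and the estimator $\mathbf{C}_e=\widehat{\mathbf{C}}_1-\widehat{\mathbf{C}}_2$ be constructed by the DACE procedure described in the context, i.e. $m$ entries are sampled from each $\mathbf{x}_i$ with replacement according to the probabilities $p_{ki}=\alpha\frac{|x_{ki}|}{\|\mathbf{x}_i\|_1}+(1-\alpha)\frac{x_{ki}^2}{\|\mathbf{x}_i\|_2^2}$. Then $\mathbf{C}_e$ is an unbiased estimator of $\mathbf{C}=\frac{1}{n}\sum_{i=1}^n\mathbf{x}_i\mathbf{x}_i^T=\frac1n\mathbf{X}\mathbf{X}^T$, i.e. $\mathbb{E}[\mathbf{C}_e]=\mathbf{C}$.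
   Context: DACE construction. Given $\mathbf{X}=[\mathbf{x}_1,\ldots,\mathbf{x}_n]\in\mathbb{R}^{d\times n}$ with $\mathbf{x}_i=(x_{1i},\ldots,x_{di})^T$, an integer $m$ with $2\le m<d$ and $\alpha\in(0,1)$, set for $k\in[d]=\{1,\dots,d\}$ and $i\in[n]$: $p_{ki}=\alpha\frac{|x_{ki}|}{\|\mathbf{x}_i\|_1}+(1-\alpha)\frac{x_{ki}^2}{\|\mathbf{x}_i\|_2^2}$ (a probability distribution on $[d]$ for each $i$). For every $i$ and $j\in[m]$, draw indices $t_{ji}\in[d]$ independently (over all $i,j$) with $\mathbb{P}(t_{ji}=k)=p_{ki}$. Let $\mathbf{e}_1,\ldots,\mathbf{e}_d$ be the standard basis of $\mathbb{R}^d$ and let $\mathbf{S}_i\in\mathbb{R}^{d\times m}$ be the matrix whose $j$-th column is $\mathbf{e}_{t_{ji}}/\sqrt{m\,p_{t_{ji}i}}$. For a square matrix $\mathbf{A}$, $\mathbb{D}(\mathbf{A})$ is the diagonal matrix with the same main diagonal as $\mathbf{A}$; for a vector $\mathbf{b}$, $\mathbb{D}(\mathbf{b})$ is the diagonal matrix with $\mathbf{b}$ on its diagonal. Let $b_{ki}=\frac{1}{1+(m-1)p_{ki}}$ and $\mathbf{b}_i=(b_{1i},\ldots,b_{di})^T$. Define $\widehat{\mathbf{C}}_1=\frac{m}{nm-n}\sum_{i=1}^n\mathbf{S}_i\mathbf{S}_i^T\mathbf{x}_i\mathbf{x}_i^T\mathbf{S}_i\mathbf{S}_i^T$, $\widehat{\mathbf{C}}_2=\frac{m}{nm-n}\sum_{i=1}^n\mathbb{D}(\mathbf{S}_i\mathbf{S}_i^T\mathbf{x}_i\mathbf{x}_i^T\mathbf{S}_i\mathbf{S}_i^T)\mathbb{D}(\mathbf{b}_i)$,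 and $\mathbf{C}_e=\widehat{\mathbf{C}}_1-\widehat{\mathbf{C}}_2$. *)

(* discrete probability over the finite sample space of all
   index draws t : 'I_n * 'I_m -> 'I_d, with the product (independent) law. *)
From HB Require Import structures.
From mathcomp Require Import all_boot all_order all_algebra.
Set Implicit Arguments. Unset Strict Implicit. Unset Printing Implicit Defensive.
Import Order.TTheory GRing.Theory Num.Theory.
Local Open Scope ring_scope.

Section DACE.
Variables (R : rcfType) (d n m : nat) (alpha : R) (X : 'M[R]_(d, n)).

Definition xcol (i : 'I_n) : 'cV[R]_d := col i X.
Definition norm1 (i : 'I_n) : R := \sum_(k < d) `|X k i|.
Definition norm2sq (i : 'I_n) : R := \sum_(k < d) (X k i) ^+ 2.

Definition pki (k : 'I_d) (i : 'I_n) : R :=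
  alpha * (`|X k i| / norm1 i) + (1 - alpha) * ((X k i) ^+ 2 / norm2sq i).

(* an outcome of all draws: t (i, j) = t_{ji} *)
Definition outcome := {ffun 'I_n * 'I_m -> 'I_d}.

Definition prob (t : outcome) : R := \prod_(ij : 'I_n * 'I_m) pki (t ij) ij.1.

Definition Smat (t : outcome) (i : 'I_n) : 'M[R]_(d, m) :=
  \matrix_(k < d, j < m)
    (if k == t (i, j) then (Num.sqrt (m%:R * pki (t (i, j)) i))^-1 else 0).

Definition Dmat (A : 'M[R]_d) : 'M[R]_d := diag_mx (\row_k A k k).
Definition Dvec (b : 'cV[R]_d) : 'M[R]_d := diag_mx (\row_k b k 0).

Definition bvec (i : 'I_n) : 'cV[R]_d :=
  \col_k (1 + (m%:R - 1) * pki k i)^-1.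

Definition SSxxSS (t : outcome) (i : 'I_n) : 'M[R]_d :=
  Smat t i *m (Smat t i)^T *m xcol i *m (xcol i)^T *m Smat t i *m (Smat t i)^T.

Definition coef : R := m%:R / (n%:R * m%:R - n%:R).

Definition C1hat (t : outcome) : 'M[R]_d := coef *: \sum_(i < n) SSxxSS t i.
Definition C2hat (t : outcome) : 'M[R]_d :=
  coef *: \sum_(i < n) (Dmat (SSxxSS t i) *m Dvec (bvec i)).
Definition Ce (t : outcome) : 'M[R]_d := C1hat t - C2hat t.

Definition Emx (Y : outcome -> 'M[R]_d) : 'M[R]_d := \sum_(t : outcome) prob t *: Y t.

Definition Cov : 'M[R]_d := n%:R^-1 *: \sum_(i < n) (xcol i *m (xcol i)^T).

End DACE.

From Pilot Require Import Defs.
From mathcomp Require Import all_boot all_order all_algebra.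
From mathcomp Require Import ring.
Set Implicit Arguments. Unset Strict Implicit. Unset Printing Implicit Defensive.
Import Order.TTheory GRing.Theory Num.Theory.
Local Open Scope ring_scope.

(* S_i S_i^T is diagonal with entries N_ki / (m p_ki), where N_ki counts the draws t_ji = k,
   so entry (k, l) of S_i S_i^T x_i x_i^T S_i S_i^T is N_ki N_li x_ki x_li / (m^2 p_ki p_li).
   The counts are multinomial, E[N_k N_l] = m (m - 1) p_k p_l + [k = l] m p_k; hence the
   expectation is ((m - 1) / m) x_k x_l plus, on the diagonal only, the bias x_k^2 / (m p_k).
   C_2 keeps the fraction b_k = 1 / (1 + (m - 1) p_k) of the diagonal, and removing it leaves
   exactly ((m - 1) / m) x_k^2 (lemma [debias_sq]); the factor m / (n m - n) turns
   (m - 1) / m into 1 / n. *)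

Lemma debias_sq (F : fieldType) (M q x : F) :
  M != 0 -> q != 0 -> 1 + (M - 1) * q != 0 ->
  let A := (M - 1) / M * x ^+ 2 + x ^+ 2 / (M * q) in
  A - A / (1 + (M - 1) * q) = (M - 1) / M * x ^+ 2.
Proof. by move=> M0 q0 b0 /=; field; rewrite M0 q0 b0. Qed.

Section ProductExpectation.
Variables (R : comPzRingType) (I K : finType) (q : I -> K -> R).

Definition expect (f : {ffun I -> K} -> R) : R :=
  \sum_(t : {ffun I -> K}) (\prod_i q i (t i)) * f t.

Lemma eq_expect f g : f =1 g -> expect f = expect g.
Proof. by move=> fg; apply: eq_bigr => t _; rewrite fg. Qed.

Lemma expect_sum (J : finType) (f : J -> {ffun I -> K} -> R) :
  expect (fun t => \sum_j f j t) = \sum_j expect (f j).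
Proof. by rewrite exchange_big; apply: eq_bigr => t _; rewrite mulr_sumr. Qed.

Lemma expectZl c f : expect (fun t => c * f t) = c * expect f.
Proof. by rewrite mulr_sumr; apply: eq_bigr => t _; rewrite mulrCA. Qed.

Lemma expectZr c f : expect (fun t => f t * c) = expect f * c.
Proof. by rewrite mulr_suml; apply: eq_bigr => t _; rewrite mulrA. Qed.

Lemma expectB f g : expect (fun t => f t - g t) = expect f - expect g.
Proof. by rewrite -sumrB; apply: eq_bigr => t _; rewrite mulrBr. Qed.

Lemma expect_prod (F : I -> K -> R) :
  expect (fun t => \prod_i F i (t i)) = \prod_i \sum_k q i k * F i k.
Proof. by rewrite bigA_distr_bigA; apply: eq_bigr => t _; rewrite -big_split. Qed.

Hypothesis q_sum1 : forall i, \sum_k q i k = 1.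

Lemma expect_prod_in (A : {set I}) (F : I -> K -> R) :
  expect (fun t => \prod_(i in A) F i (t i)) = \prod_(i in A) \sum_k q i k * F i k.
Proof.
pose G i := if i \in A then F i else fun=> 1.
transitivity (expect (fun t => \prod_i G i (t i))).
  by apply: eq_expect => t; rewrite big_mkcond; apply: eq_bigr => i _; rewrite /G; case: ifP.
rewrite expect_prod [RHS]big_mkcond; apply: eq_bigr => i _; rewrite /G; case: ifP => // _.
by under eq_bigr do rewrite mulr1.
Qed.

Lemma expect_coord a (F : K -> R) :
  expect (fun t => F (t a)) = \sum_k q a k * F k.
Proof.
have := expect_prod_in [set a] (fun=> F); rewrite big_set1 => <-.
by apply: eq_expect => t; rewrite big_set1.
Qed.

Lemma expect_coord2 a b (F G : K -> R) : a != b ->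
  expect (fun t => F (t a) * G (t b)) =
  (\sum_k q a k * F k) * (\sum_k q b k * G k).
Proof.
move=> ab; pose H i := if i == a then F else G.
have notin_b : a \notin [set b] by rewrite in_set1.
have := expect_prod_in [set a; b] H.
rewrite big_setU1 // big_set1 /H eqxx eq_sym (negbTE ab) => <-.
by apply: eq_expect => t; rewrite big_setU1 // big_set1 /H eqxx eq_sym (negbTE ab).
Qed.

Variables (J : finType) (c : J -> I) (r : K -> R).
Hypotheses (c_inj : injective c) (q_c : forall j, q (c j) = r).

Definition count (t : {ffun I -> K}) (k : K) : R := \sum_j (t (c j) == k)%:R.

Lemma expect_count2 k l :
  expect (fun t => count t k * count t l) =
  #|J|%:R * ((k == l)%:R * r k + (#|J|%:R - 1) * (r k * r l)).
Proof.
have r_pick k' : \sum_k0 r k0 * (k0 == k')%:R = r k'.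
  by rewrite (bigD1 k') //= eqxx mulr1 big1 ?addr0 // => k0 /negbTE ->; rewrite mulr0.
rewrite (@eq_expect _ (fun t => \sum_j1 \sum_j2
    ((t (c j1) == k)%:R * (t (c j2) == l)%:R))); last first.
  by move=> t; rewrite /count mulr_suml; apply: eq_bigr => j1 _; rewrite mulr_sumr.
rewrite expect_sum [RHS]mulr_natl -sumr_const; apply: eq_bigr => j1 _.
rewrite expect_sum (bigD1 j1) //=; congr (_ + _).
  rewrite (@expect_coord (c j1) (fun k0 => (k0 == k)%:R * (k0 == l)%:R)) q_c.
  have [<-|kl] := eqVneq k l; last first.
    rewrite mul0r big1 // => k0 _.
    by case: eqP => [->|_]; rewrite ?(negbTE kl) ?mul0r ?mulr0.
  rewrite mulr1n mul1r -(r_pick k).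
  by apply: eq_bigr => k0 _; rewrite -natrM mulnb andbb.
have off_diag j2 : j2 != j1 ->
    expect (fun t => (t (c j1) == k)%:R * (t (c j2) == l)%:R) = r k * r l.
  move=> j21; rewrite (@expect_coord2 (c j1) (c j2) (fun k0 => (k0 == k)%:R)
    (fun k0 => (k0 == l)%:R)); last by rewrite (inj_eq c_inj) eq_sym.
  by rewrite !q_c !r_pick.
rewrite (eq_bigr _ off_diag).
apply/(addrI (r k * r l)); rewrite -(bigD1 j1 (P := xpredT)) //=.
by rewrite sumr_const mulrBl mul1r mulr_natl addrC subrK.
Qed.

End ProductExpectation.

Section DACE.
Variables (R : rcfType) (d n m : nat) (alpha : R) (X : 'M[R]_(d, n)).
Hypotheses (ha0 : 0 < alpha) (ha1 : alpha < 1).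

Local Notation p := (pki alpha X).

Lemma norm1_gt0 k i : X k i != 0 -> 0 < norm1 X i.
Proof.
move=> xk; rewrite lt_def sumr_ge0 ?andbT => [|j _]; last exact: normr_ge0.
apply: contra xk => /eqP /psumr_eq0P x0.
by rewrite -normr_eq0 x0 // => j _; exact: normr_ge0.
Qed.

Lemma norm2sq_gt0 k i : X k i != 0 -> 0 < norm2sq X i.
Proof.
move=> xk; rewrite lt_def sumr_ge0 ?andbT => [|j _]; last exact: sqr_ge0.
apply: contra xk => /eqP /psumr_eq0P x0.
by rewrite -sqrf_eq0 x0 // => j _; exact: sqr_ge0.
Qed.

Lemma pki_ge0 k i : 0 <= p k i.
Proof.
have alpha_ge0 : 0 <= alpha by exact: ltW.
have alpha_le1 : 0 <= 1 - alpha by rewrite subr_ge0 ltW.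
rewrite /pki addr_ge0 // mulr_ge0 // divr_ge0 ?normr_ge0 ?sqr_ge0 //.
  by apply: sumr_ge0 => j _; exact: normr_ge0.
by apply: sumr_ge0 => j _; exact: sqr_ge0.
Qed.

Lemma pki_gt0 k i : X k i != 0 -> 0 < p k i.
Proof.
move=> xk; rewrite /pki addr_gt0 // mulr_gt0 ?subr_gt0 // divr_gt0 //.
- by rewrite normr_gt0.
- exact: norm1_gt0 xk.
- by rewrite exprn_even_gt0.
- exact: norm2sq_gt0 xk.
Qed.

Lemma sum_pki i : col i X != 0 -> \sum_k p k i = 1.
Proof.
have [k xk _ | X0 /eqP[]] := pickP (fun k => X k i != 0); last first.
  by apply/matrixP => k j; rewrite !mxE; apply/eqP/negbFE/X0.
rewrite /pki big_split /= -!mulr_sumr -!mulr_suml -/(norm1 X i) -/(norm2sq X i).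
have [n1 n2] := (norm1_gt0 xk, norm2sq_gt0 xk).
by rewrite !divff ?gt_eqF // !mulr1 addrC subrK.
Qed.

Definition draw_law (ij : 'I_n * 'I_m) (k : 'I_d) : R := p k ij.1.
Local Notation E := (expect draw_law).

Lemma Emx_entry (Y : outcome d n m -> 'M[R]_d) k l :
  Emx alpha X Y k l = E (fun t => Y t k l).
Proof. by rewrite /Emx summxE; apply: eq_bigr => t _; rewrite mxE. Qed.

Lemma Cov_entry k l : Cov X k l = n%:R^-1 * \sum_i X k i * X l i.
Proof.
rewrite !mxE summxE; congr (_ * _).
by apply: eq_bigr => i _; rewrite !mxE big_ord1 !mxE.
Qed.

Definition draws (t : outcome d n m) (i : 'I_n) (k : 'I_d) : R :=
  count R (fun j : 'I_m => (i, j)) t k.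

Definition sketch (t : outcome d n m) (i : 'I_n) : 'cV[R]_d :=
  Smat alpha X t i *m (Smat alpha X t i)^T *m Defs.xcol X i.

Lemma Smat_mul_trmx t i : Smat alpha X t i *m (Smat alpha X t i)^T =
  diag_mx (\row_k (draws t i k / (m%:R * p k i))).
Proof.
apply/matrixP => k l; rewrite !mxE /draws /count mulr_suml.
rewrite -sumrMnl; apply: eq_bigr => j _; rewrite !mxE.
have [<- | _] := eqVneq (t (i, j)) k; last by rewrite !mul0r mul0rn.
have [_ | _] := eqVneq l (t (i, j)); last by rewrite mulr0 mulr0n.
by rewrite mulr1n mul1r -invfM -expr2 sqr_sqrtr // mulr_ge0 ?ler0n ?pki_ge0.
Qed.

Lemma sketchE t i k : sketch t i k 0 = draws t i k * (X k i / (m%:R * p k i)).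
Proof. by rewrite /sketch Smat_mul_trmx mul_diag_mx !mxE mulrAC -mulrA. Qed.

Lemma SSxxSS_entry t i k l :
  SSxxSS alpha X t i k l = sketch t i k 0 * sketch t i l 0.
Proof.
have -> : SSxxSS alpha X t i = sketch t i *m (sketch t i)^T.
  by rewrite /SSxxSS /sketch !trmx_mul trmxK !mulmxA.
by rewrite mxE big_ord1 [(_^T) _ _]mxE.
Qed.

Lemma Ce_entry (t : outcome d n m) k l : Ce alpha X t k l = coef R n m *
  \sum_i (SSxxSS alpha X t i k l -
          (k == l)%:R * (SSxxSS alpha X t i k k * bvec m alpha X i k 0)).
Proof.
rewrite /Ce /C1hat /C2hat; move: (SSxxSS alpha X t) => A.
rewrite !mxE !summxE -mulrBr -sumrB; congr (_ * _); apply: eq_bigr => i _.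
by rewrite mul_diag_mx !mxE mulrnAr -mulr_natl.
Qed.

Hypotheses (hcols : forall i, col i X != 0) (hm2 : (2 <= m)%N).

Lemma draw_law_sum1 ij : \sum_k draw_law ij k = 1.
Proof. exact: sum_pki. Qed.

Lemma expect_draws2 i k l : E (fun t => draws t i k * draws t i l) =
  m%:R * ((k == l)%:R * p k i + (m%:R - 1) * (p k i * p l i)).
Proof.
have inj_i : injective (fun j : 'I_m => (i, j)) by move=> j j' [].
by rewrite (expect_count2 draw_law_sum1 inj_i (r := p^~ i)) ?card_ord.
Qed.

Lemma divfK_mp k i : X k i / (m%:R * p k i) * (m%:R * p k i) = X k i.
Proof.
have [-> | xk] := eqVneq (X k i) 0; first by rewrite !mul0r.
rewrite divfK // mulf_neq0 ?gt_eqF ?pki_gt0 //.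
by rewrite ltr0n (leq_trans _ hm2).
Qed.

Lemma expect_sketch2 i k l :
  E (fun t => sketch t i k 0 * sketch t i l 0) =
  (m%:R - 1) / m%:R * (X k i * X l i) + (k == l)%:R * (X k i ^+ 2 / (m%:R * p k i)).
Proof.
set y := fun k => X k i / (m%:R * p k i).
rewrite (eq_expect draw_law (g := fun t => y k * y l * (draws t i k * draws t i l)));
  last by move=> t; rewrite !sketchE mulrACA mulrC.
have m_neq0 : m%:R != 0 :> R by rewrite pnatr_eq0 -lt0n (leq_trans _ hm2).
have sq_y : X k i ^+ 2 / (m%:R * p k i) = X k i * y k by rewrite /y mulrA.
rewrite expectZl expect_draws2 sq_y; have [<- | kl] := eqVneq k l.
  by rewrite -[X k i](divfK_mp k i) -/(y k); field.
rewrite -[X k i](divfK_mp k i) -[X l i](divfK_mp l i) -/(y k) -/(y l).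
by rewrite -[false%:R]/(0 : R); field.
Qed.

Lemma expect_debiased i k l :
  E (fun t => SSxxSS alpha X t i k l -
              (k == l)%:R * (SSxxSS alpha X t i k k * bvec m alpha X i k 0)) =
  (m%:R - 1) / m%:R * (X k i * X l i).
Proof.
have m_gt0 : 0 < m%:R :> R by rewrite ltr0n (leq_trans _ hm2).
rewrite expectB expectZl expectZr.
rewrite (eq_expect draw_law (fun t => SSxxSS_entry t i k l)).
rewrite (eq_expect draw_law (fun t => SSxxSS_entry t i k k)).
rewrite !expect_sketch2 mxE; have [<- | kl] := eqVneq k l; last first.
  by rewrite -[false%:R]/(0 : R) !mul0r subr0 addr0.
have [-> | xk] := eqVneq (X k i) 0; first by rewrite expr2 !(mul0r, mulr0, addr0, subr0).
have p_gt0 := pki_gt0 xk.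
have b_gt0 : 0 < 1 + (m%:R - 1) * p k i.
  by rewrite ltr_wpDr // mulr_ge0 ?(ltW p_gt0) // subr_ge0 ler1n ltnW.
by rewrite eqxx -[true%:R]/(1 : R) !mul1r -expr2 debias_sq ?gt_eqF.
Qed.

Lemma coef_mul_bias : coef R n m * ((m%:R - 1) / m%:R) = n%:R^-1.
Proof.
rewrite /coef -[X in _ - X]mulr1 -mulrBr.
have [-> | n_gt0] := posnP n; first by rewrite mul0r invr0 mulr0 mul0r.
have n0 : n%:R != 0 :> R by rewrite pnatr_eq0 -lt0n.
have m0 : m%:R != 0 :> R by rewrite pnatr_eq0 -lt0n (leq_trans _ hm2).
have m1 : m%:R - 1 != 0 :> R by rewrite subr_eq0 pnatr_eq1 gtn_eqF.
by field; rewrite n0 m0 m1.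
Qed.

End DACE.

Theorem theorem1 (R : rcfType) (d n m : nat) (alpha : R) (X : 'M[R]_(d, n))
  (hcols : forall i : 'I_n, col i X != 0)
  (hm2 : (2 <= m)%N) (hmd : (m < d)%N)
  (ha0 : 0 < alpha) (ha1 : alpha < 1) :
  Emx alpha X (@Ce R d n m alpha X) = Cov X.
Proof.
apply/matrixP => k l.
rewrite Emx_entry (eq_expect _ (fun t => Ce_entry alpha X t k l)) expectZl expect_sum.
under eq_bigr do rewrite expect_debiased //.
by rewrite -mulr_sumr mulrA coef_mul_bias // Cov_entry.
Qed.
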